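(* Let $G$ be a torsion-free locally compact abelian group such that $G_{op}=G$, and let $G^{*}$ be its minimal divisible extension. Then $G^{*}_{op}=G^{*}$.
   Context: A subgroup $H$ of an abelian group $G$ is pure if $nH=H\cap nG$ for every positive integer $n$. For an LCA group $G$, $G_{op}$ denotes the intersection of all open pure subgroups of $G$. For an LCA group $G$, $G^{*}$ denotes the minimal divisible extension (divisible hull) of $G$, topologized as an LCA group containing $G$ as an open subgroup (as in Hewitt–Ross 4.18.h). *)

From HB Require Import structures.
From mathcomp Require Import all_boot all_order all_algebra.
From mathcomp Require Import all_classical all_reals all_analysis.
Set Implicit Arguments. Unset Strict Implicit. Unset Printing Implicit Defensive.
Import Order.TTheory GRing.Theory Num.Theory.
Local Open Scope classical_set_scope.
Local Open Scope ring_scope.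

Definition is_subgroup (G : zmodType) (H : set G) : Prop :=
  H 0 /\ (forall x y, H x -> H y -> H (x - y)).

Definition nmul (G : zmodType) (n : nat) (A : set G) : set G :=
  [set x *+ n | x in A].

Definition pure (G : zmodType) (H : set G) : Prop :=
  forall n : nat, (0 < n)%N -> nmul n H = H `&` nmul n setT.

Definition G_op (G : topologicalZmodType) : set G :=
  \bigcap_(H in [set H : set G | is_subgroup H /\ open H /\ pure H]) H.

Definition LCA (G : topologicalZmodType) : Prop :=
  hausdorff_space G /\ locally_compact [set: G].

Definition torsion_free (G : zmodType) : Prop :=
  forall (x : G) (n : nat), (0 < n)%N -> x *+ n = 0 -> x = 0.

Definition divisible_set (G : zmodType) (D : set G) : Prop :=
  forall x n, (0 < n)%N -> D x -> exists2 y, D y & y *+ n = x.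

Definition divisible (G : zmodType) : Prop := divisible_set [set: G].

(* f : G -> Gs exhibits the LCA group Gs as the minimal divisible extension G^*
   of G, topologized so that G is an open (topological) subgroup of Gs:
   - f is an injective group homomorphism,
   - f is a homeomorphism of G onto the open subgroup f(G) of Gs
     (continuous, and maps open sets to open sets),
   - Gs is divisible, and no proper divisible subgroup of Gs contains f(G). *)
Definition minimal_divisible_extension (G Gs : topologicalZmodType)
    (f : G -> Gs) : Prop :=
  (forall x y, f (x - y) = f x - f y) /\
  injective f /\
  continuous f /\
  (forall U : set G, open U -> open (f @` U)) /\
  divisible Gs /\
  (forall D : set Gs, is_subgroup D -> divisible_set D ->
         f @` setT `<=` D -> D = setT).

From HB Require Import structures.
From mathcomp Require Import all_boot all_order all_algebra.
From mathcomp Require Import all_classical all_reals all_analysis.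
Import Order.TTheory GRing.Theory Num.Theory.
Local Open Scope classical_set_scope.
Local Open Scope ring_scope.

(* The argument is purely
   algebraic apart from the continuity of f.

   1. A divisible group V that is an essential divisible extension of a
      torsion-free subgroup A (no proper divisible subgroup contains A) is
      torsion-free.  If s has prime order p and s is not in A, Zorn's lemma
      gives a subgroup M containing A, maximal among those avoiding s; every
      z outside M has s in M + Zz, and from this M is divisible by every
      prime, hence divisible, hence M = V by minimality, contradicting s.
   2. Preimages of pure subgroups under homomorphisms into a torsion-free
      group are pure, and pure subgroups of a divisible group are divisible.
   3. For an open pure subgroup H of G^*, the preimage f^-1(H) is an open
      pure subgroup of G, so it is all of G; thus H is a divisible subgroup
      of G^* containing f(G), and minimality gives H = G^*. *)

Section Subgroups.
Variable V : zmodType.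
Implicit Types (A : set V) (x y : V).

Lemma subgroupN A x : is_subgroup A -> A x -> A (- x).
Proof. by move=> [A0 AB] Ax; rewrite -sub0r; apply: AB. Qed.

Lemma subgroupD A x y : is_subgroup A -> A x -> A y -> A (x + y).
Proof.
by move=> AS Ax Ay; rewrite -[y]opprK; apply: AS.2 => //; apply: subgroupN.
Qed.

Lemma subgroupMn A x n : is_subgroup A -> A x -> A (x *+ n).
Proof.
move=> AS Ax; elim: n => [|n IH]; first by rewrite mulr0n; case: AS.
by rewrite mulrS; apply: subgroupD.
Qed.

Lemma subgroupMz A x k : is_subgroup A -> A x -> A (x *~ k).
Proof.
move=> AS Ax; case: k => n; first exact: subgroupMn.
by rewrite NegzE mulrNz; apply: subgroupN => //; apply: subgroupMn.
Qed.

Lemma mulrz_natM x (u : int) (n : nat) : x *~ (u * n%:Z) = (x *+ n) *~ u.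
Proof. by rewrite mulrC mulrzA -pmulrn. Qed.

Lemma mulrzMn x (k : int) (n : nat) : (x *~ k) *+ n = (x *+ n) *~ k.
Proof. by rewrite pmulrn -mulrzA mulrz_natM. Qed.

Lemma divisible_set_primes A :
  (forall q x, prime q -> A x -> exists2 w, A w & w *+ q = x) ->
  divisible_set A.
Proof.
move=> divq x n; elim/ltn_ind: n x => n IH x n0 Ax.
have [n1|] := ltnP 1 n; last first.
  move=> n_le1; have -> : n = 1%N by apply/eqP; rewrite eqn_leq n_le1.
  by exists x.
have pn := pdiv_prime n1; have pdn := pdiv_dvd n.
have [y Ay <-] := divq _ x pn Ax.
have [||w Aw <-] := IH (n %/ pdiv n)%N _ y _ Ay.
- by apply: ltn_Pdiv => //; exact: prime_gt1.
- by rewrite divn_gt0 ?prime_gt0 // dvdn_leq.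
by exists w => //; rewrite -mulrnA divnK.
Qed.

Lemma torsion_free_primes :
  (forall x p, prime p -> x *+ p = 0 -> x = 0) -> torsion_free V.
Proof.
move=> tfp x n; elim/ltn_ind: n x => n IH x n0 xn.
have [n1|] := ltnP 1 n; last first.
  by move=> n_le1; move: xn; have -> : n = 1%N by apply/eqP; rewrite eqn_leq n_le1.
have pn := pdiv_prime n1.
apply: (IH (n %/ pdiv n)%N _ x).
- by apply: ltn_Pdiv => //; exact: prime_gt1.
- by rewrite divn_gt0 ?prime_gt0 // dvdn_leq // pdiv_dvd.
- by apply: (tfp _ _ pn); rewrite -mulrnA divnK // pdiv_dvd.
Qed.

Lemma pure_divisible A : divisible V -> pure A -> divisible_set A.
Proof.
move=> divV Apure x n n0 Ax.
have : (A `&` nmul n setT) x.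
  by split => //; have [z _ <-] := divV x n n0 I; exists z.
by rewrite -Apure // => -[w Aw <-]; exists w.
Qed.

End Subgroups.

Section MaximalAvoiding.
Variables (V : zmodType) (A : set V) (s : V).

Definition maximal_avoiding (M : set V) : Prop :=
  [/\ is_subgroup M, A `<=` M, ~ M s &
      forall N, is_subgroup N -> M `<=` N -> ~ N s -> N = M].

(* Zorn's lemma; the empty set is admitted to make the empty chain harmless. *)
Lemma exists_maximal_avoiding :
  is_subgroup A -> ~ A s -> exists M, maximal_avoiding M.
Proof.
move=> AS nAs.
pose P M := [/\ M = set0 \/ A `<=` M, forall x y, M x -> M y -> M (x - y) & ~ M s].
have [M [[M0A MB nMs] Mmax]] : exists M, P M /\ forall N, M `<` N -> ~ P N.
  apply: Zorn_bigcup => F FP Ftot; split.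
  - have [[X FX AX]|nX] := pselect (exists2 X, F X & A `<=` X).
      by right => a Aa; exists X => //; exact: AX.
    left; apply/seteqP; split => // x [X FX Xx].
    have [[X0|AX] _ _] := FP X FX; first by rewrite X0 in Xx.
    by case: nX; exists X.
  - move=> x y [X FX Xx] [Y FY Yy].
    have [XY|YX] := Ftot X Y FX FY.
      by have [_ YB _] := FP Y FY; exists Y => //; apply: YB => //; exact: XY.
    by have [_ XB _] := FP X FX; exists X => //; apply: XB => //; exact: YX.
  - by move=> [X FX Xs]; have [_ _ nXs] := FP X FX.
have AM : A `<=` M.
  case: M0A => [M0|//]; exfalso.
  apply: (Mmax A); last by split; [right|case: AS|].
  by rewrite M0; split => // /(_ 0); apply; case: AS.
exists M; split => //; first by split; [apply: AM; case: AS|].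
move=> N NS MN nNs; apply/seteqP; split=> //; apply: contrapT => NM.
by apply: (Mmax N); split => //; [right; apply: subset_trans MN|case: NS].
Qed.

Variable M : set V.
Hypothesis maxM : maximal_avoiding M.

Lemma maximal_avoiding_span z :
  ~ M z -> exists m k, M m /\ s = m + z *~ k.
Proof.
have [MS _ nMs Mmax] := maxM.
move=> nMz; apply: contrapT => nspan.
pose N := [set y | exists m k, M m /\ y = m + z *~ k].
have MN : M `<=` N by move=> y My; exists y, 0; rewrite mulr0z addr0.
have NS : is_subgroup N.
  split; first by apply: MN; case: MS.
  move=> _ _ [m1 [k1 [M1 ->]]] [m2 [k2 [M2 ->]]].
  exists (m1 - m2), (k1 - k2); split; first exact: MS.2.
  by rewrite mulrzBr opprD addrACA.
have NM : N = M by apply: Mmax => // -[m [k [Mm sE]]]; apply: nspan; exists m, k.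
by apply: nMz; rewrite -NM; exists 0, 1; rewrite mulr1z add0r; split => //; case: MS.
Qed.

Variable p : nat.
Hypotheses (p_prime : prime p) (sp : s *+ p = 0).

Lemma maximal_avoiding_coprime q z :
  prime q -> q != p -> M (z *+ q) -> M z.
Proof.
have [MS _ nMs _] := maxM.
move=> q_prime qp Mzq; apply: contrapT => nMz.
have [m [k [Mm sE]]] := maximal_avoiding_span z nMz.
have Msq : M (s *+ q).
  rewrite sE mulrnDl mulrzMn.
  by apply: subgroupD => //; [apply: subgroupMn|apply: subgroupMz].
have : coprimez p q by rewrite coprimezE /= prime_coprime // dvdn_prime2 // eq_sym.
move=> /coprimezP [[u v] /= e]; apply: nMs.
rewrite -(mulr1z s) -e mulrzDr !mulrz_natM sp mul0rz add0r.
exact: subgroupMz.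
Qed.

(* Dividing by p itself: a suitable correction of z by a multiple of s
   lies in M and has the same p-th multiple. *)
Lemma maximal_avoiding_div_p z :
  ~ M z -> M (z *+ p) -> exists2 w, M w & w *+ p = z *+ p.
Proof.
have [MS _ nMs _] := maxM.
move=> nMz Mzp; have [m [k [Mm sE]]] := maximal_avoiding_span z nMz.
have [pk|npk] := boolP (p %| `|k|)%N.
  have /dvdzP [k' kE] : (p%:Z %| k)%Z by rewrite dvdzE.
  by case: nMs; rewrite sE kE mulrz_natM; apply: subgroupD => //; apply: subgroupMz.
have : coprimez k p by rewrite coprimezE coprime_sym prime_coprime.
move=> /coprimezP [[u v] /= e].
exists (z - s *~ u); last by rewrite mulrnBl mulrzMn sp mul0rz subr0.
have -> : z - s *~ u = (z *+ p) *~ v - m *~ u.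
  rewrite -{1}(mulr1z z) -e mulrzDr mulrz_natM sE mulrzDl (mulrC u) mulrzA.
  by rewrite [_ + z *~ k *~ u]addrC opprD addrACA subrr add0r.
by apply: MS.2; apply: subgroupMz.
Qed.

Lemma maximal_avoiding_divisible : divisible V -> divisible_set M.
Proof.
move=> divV; apply: divisible_set_primes => q x q_prime Mx.
have [z _ zx] := divV x q (prime_gt0 q_prime) I.
have [Mz|nMz] := pselect (M z); first by exists z.
have [qp|qp] := eqVneq q p; last first.
  by case: nMz; apply: (maximal_avoiding_coprime _ _ q_prime qp); rewrite zx.
by subst q; rewrite -zx; apply: maximal_avoiding_div_p => //; rewrite zx.
Qed.

End MaximalAvoiding.
Arguments exists_maximal_avoiding {V A s}.
Arguments maximal_avoiding_divisible {V A s M} maxM {p}.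

Lemma essential_prime_torsion (V : zmodType) (A : set V) (s : V) (p : nat) :
  divisible V -> is_subgroup A ->
  (forall D : set V, is_subgroup D -> divisible_set D -> A `<=` D -> D = setT) ->
  prime p -> s *+ p = 0 -> A s.
Proof.
move=> divV AS Amin pp sp; apply: contrapT => nAs.
have [M maxM] := exists_maximal_avoiding AS nAs.
have [MS AM nMs _] := maxM.
by apply: nMs; rewrite (Amin M MS (maximal_avoiding_divisible maxM pp sp divV) AM).
Qed.

Arguments essential_prime_torsion {V A s p}.

Section Morphism.
Variables (U V : zmodType) (f : U -> V).
Hypothesis fB : forall x y, f (x - y) = f x - f y.

Lemma morph0 : f 0 = 0.
Proof. by have := fB 0 0; rewrite !subrr. Qed.

Lemma morphMn x n : f (x *+ n) = f x *+ n.
Proof.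
have fN y : f (- y) = - f y by have := fB 0 y; rewrite morph0 !sub0r.
have fD y z : f (y + z) = f y + f z by have := fB y (- z); rewrite opprK fN opprK.
by elim: n => [|n IH]; rewrite ?mulr0n ?morph0 // !mulrS fD IH.
Qed.

Lemma image_subgroup : is_subgroup (f @` setT).
Proof.
by split; [exists 0; rewrite ?morph0|move=> _ _ [a _ <-] [b _ <-]; exists (a - b)].
Qed.

Lemma preimage_subgroup (H : set V) : is_subgroup H -> is_subgroup (f @^-1` H).
Proof.
move=> [H0 HB]; split; first by rewrite /= morph0.
by move=> a b Ha Hb; rewrite /= fB; apply: HB.
Qed.

Lemma preimage_pure (H : set V) :
  torsion_free V -> is_subgroup H -> pure H -> pure (f @^-1` H).
Proof.
move=> tfV HS Hpure n n0; apply/seteqP; split.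
  by move=> _ [y Hy <-]; split; [rewrite /= morphMn; apply: subgroupMn|exists y].
move=> y [Hy [g _ gy]].
have : (H `&` nmul n setT) (f y).
  by split => //; exists (f g) => //; rewrite -morphMn gy.
rewrite -Hpure // => -[h Hh hy].
have : (f g - h) *+ n = 0 by rewrite mulrnBl -morphMn gy hy subrr.
move=> /(tfV _ _ n0) /eqP; rewrite subr_eq0 => /eqP fgh.
by exists g; rewrite //= fgh.
Qed.

Lemma essential_torsion_free :
  injective f -> torsion_free U -> divisible V ->
  (forall D : set V, is_subgroup D -> divisible_set D ->
     f @` setT `<=` D -> D = setT) ->
  torsion_free V.
Proof.
move=> finj tfU divV fmin; apply: torsion_free_primes => s p pp sp.
have [g _ gs] := essential_prime_torsion divV image_subgroup fmin pp sp.
have gp : g *+ p = 0 by apply: finj; rewrite morphMn gs sp morph0.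
by rewrite -gs (tfU g p (prime_gt0 pp) gp) morph0.
Qed.

End Morphism.
Arguments preimage_subgroup {U V f} fB {H}.
Arguments preimage_pure {U V f} fB {H}.
Arguments essential_torsion_free {U V f}.

Theorem corollary10 (G Gs : topologicalZmodType) (f : G -> Gs) :
  @LCA G -> @torsion_free G -> @G_op G = [set: G] ->
  @LCA Gs -> minimal_divisible_extension f ->
  @G_op Gs = [set: Gs].
Proof.
move=> _ tfG GopG _ [fB [finj [fc [_ [divGs fmin]]]]].
have tfGs := essential_torsion_free fB finj tfG divGs fmin.
apply/seteqP; split => // x _ H [HS [Hopen Hpure]].
suff -> : H = setT by [].
apply: fmin => //; first exact: pure_divisible.
move=> _ [g _ <-]; have /(_ (f @^-1` H)) : G_op g by rewrite GopG.
apply; split; first exact (@preimage_subgroup G Gs f fB H HS).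
split; first by apply: open_comp => // y _; apply: fc.
exact (@preimage_pure G Gs f fB H tfGs HS Hpure).
Qed.
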